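(* Let $\mathcal S\subset M_n$ be a matricial system (a self-adjoint subspace of $M_n$ containing $I_n$). Then $\mathrm{Ind}_{\mathrm{CP}}(M_n:\mathcal S)^{-1}$ equals the optimal value of the semidefinite program $$\begin{aligned}&\text{maximize } \lambda\quad(\lambda\in\mathbb R,\ X\in M_n\otimes M_n)\\ &\text{subject to } (\mathrm{tr}\otimes\mathrm{id})(X)=(1-\lambda)I_n,\\ &\qquad X+\lambda\Delta_n\in M_n\otimes\mathcal S,\\ &\qquad X\in(M_n\otimes M_n)^+,\end{aligned}$$ where $\Delta_n=\sum_{i,j=1}^nE_{ij}\otimes E_{ij}$.
   Context: $E_{ij}$ are the matrix units of $M_n$, $\mathrm{tr}$ is the (unnormalized) trace on $M_n$, and $\mathrm{tr}\otimes\mathrm{id}:M_n\otimes M_n\to M_n$ is the partial trace over the first factor. $M_n\otimes\mathcal S$ is the subspace of $M_n\otimes M_n$ spanned by $A\otimes B$, $A\in M_n$, $B\in\mathcal S$. For an operator system $\mathcal X$ with unit $1$, $\mathrm{CP}_1(\mathcal X)$ is the set of completely positive $\varphi:\mathcal X\to\mathcal X$ with $\varphi(\mathbb C1)\subset\mathbb C1$, and for a subsystem $\mathcal X_0$, $\mathrm{Ind}_{\mathrm{CP}}(\mathcal X:\mathcal X_0)=\inf\{\|\varphi(1)\|:\varphi\in\mathrm{CP}_1(\mathcal X),\ \varphi(\mathcal X)\subset\mathcal X_0,\ \varphi-\mathrm{id}_{\mathcal X}\text{ completely positive}\}$. *)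

From HB Require Import structures.
From mathcomp Require Import all_boot all_order all_algebra.
From mathcomp Require Import complex mxtens.
From mathcomp Require Import classical_sets reals.
Set Implicit Arguments. Unset Strict Implicit. Unset Printing Implicit Defensive.
Import Order.TTheory GRing.Theory Num.Theory.
Local Open Scope ring_scope.
Local Open Scope classical_set_scope.

Section Defs.
Variable R : realType.
Local Notation C := R[i].

Definition adj m p (A : 'M[C]_(m, p)) : 'M[C]_(p, m) := (map_mx Num.conj A)^T.

Definition psd m (A : 'M[C]_m) : Prop :=
  forall v : 'cV[C]_m, 0 <= (adj v *m A *m v) 0 0.

Definition opnorm m (A : 'M[C]_m) : R :=
  sup [set r : R | exists v : 'cV[C]_m,
        (adj v *m v) 0 0 = 1 /\ 0 <= r /\
        real_complex R (r ^+ 2) = (adj (A *m v) *m (A *m v)) 0 0].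

(* M_k (x) M_n is represented by 'M_(k * n) via the Kronecker product *t
   (first tensor factor = outer index).  blk i j X is the (i,j) block of X,
   i.e. X = \sum_(i,j) E_ij *t blk i j X. *)
Definition blk k n (i j : 'I_k) (X : 'M[C]_(k * n)) : 'M[C]_n :=
  \matrix_(a, b) X (mxtens_index (i, a)) (mxtens_index (j, b)).

Definition ampl n k (phi : 'M[C]_n -> 'M[C]_n) (X : 'M[C]_(k * n)) : 'M[C]_(k * n) :=
  \sum_(i < k) \sum_(j < k) (delta_mx i j *t phi (blk i j X)).

Definition CP n (phi : 'M[C]_n -> 'M[C]_n) : Prop :=
  linear phi /\ forall (k : nat) (X : 'M[C]_(k * n)), psd X -> psd (ampl phi X).

Definition matricial_system n (S : {vspace 'M[C]_n}) : Prop :=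
  (1%:M \in S) /\ forall A, A \in S -> adj A \in S.

Definition IndCP n (S : {vspace 'M[C]_n}) : R :=
  inf [set r : R | exists phi : 'M[C]_n -> 'M[C]_n,
        [/\ CP phi,
            (forall a : C, exists c : C, phi a%:M = c%:M),
            (forall A, phi A \in S),
            CP (fun A => phi A - A)
          & r = opnorm (phi 1%:M)]].

Definition ptrace n (X : 'M[C]_(n * n)) : 'M[C]_n := \sum_(i < n) blk i i X.

Definition in_tensS n (S : {vspace 'M[C]_n}) (X : 'M[C]_(n * n)) : Prop :=
  exists (m : nat) (A B : 'I_m -> 'M[C]_n),
    (forall k, B k \in S) /\ X = \sum_(k < m) (A k *t B k).

Definition Delta n : 'M[C]_(n * n) :=
  \sum_(i < n) \sum_(j < n) (delta_mx i j *t delta_mx i j).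

Definition sdp_feasible n (S : {vspace 'M[C]_n}) : set R :=
  [set l : R | exists X : 'M[C]_(n * n),
     [/\ ptrace X = (real_complex R (1 - l))%:M,
         in_tensS S (X + real_complex R l *: Delta n)
       & psd X]].

Definition sdp_value n (S : {vspace 'M[C]_n}) : R := sup (sdp_feasible S).

End Defs.

(* A map phi on M_n is determined by its Choi matrix C_phi = (id (x) phi)(Delta_n),
   whose blocks are the phi(E_ab); phi is completely positive iff C_phi >= 0.
   If phi is admissible for Ind_CP(M_n : S) with phi(1) = c 1, then c >= 1 and
   X = (C_phi - Delta_n) / c is feasible for lambda = 1 / c: the conditions
   "phi - id is CP" and "phi(M_n) in S" become X >= 0 and X + lambda Delta_n in M_n (x) S,
   and tr (x) id (C_phi) = phi(1).  Conversely, a feasible (lambda, X) with lambda > 0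
   is turned back into the admissible map with Choi matrix X / lambda + Delta_n, for
   which phi(1) = 1 / lambda.  As lambda = 0 is always feasible and every feasible
   lambda is at most 1, the infimum of the c's and the supremum of the lambda's are
   inverse to each other (both sides being 0 when no map is admissible). *)

From HB Require Import structures.
From mathcomp Require Import all_boot all_order all_algebra.
From mathcomp Require Import complex mxtens.
From mathcomp Require Import classical_sets reals.
From mathcomp Require Import ring lra sesquilinear spectral boolp.
Import Order.TTheory GRing.Theory Num.Theory.
Local Open Scope ring_scope.
Set Implicit Arguments. Unset Strict Implicit. Unset Printing Implicit Defensive.

Section Blocks.
Variable R : realType.
Local Notation C := R[i].

Lemma sum_mxtens_index (V : nmodType) k n (F : 'I_(k * n) -> V) :
  \sum_(x < k * n) F x = \sum_(i < k) \sum_(p < n) F (mxtens_index (i, p)).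
Proof.
rewrite pair_big /=; apply: reindex => /=; exists (@mxtens_unindex k n) => x _.
  by rewrite mxtens_indexK -surjective_pairing.
by rewrite mxtens_unindexK.
Qed.

Fact blk_is_linear k n (i j : 'I_k) : linear (@blk R k n i j).
Proof. by move=> c X Y; apply/matrixP => p q; rewrite !mxE. Qed.

HB.instance Definition _ k n (i j : 'I_k) :=
  GRing.isLinear.Build C _ _ _ (@blk R k n i j) (blk_is_linear i j).

Fact ptrace_is_linear n : linear (@ptrace R n).
Proof.
by move=> c X Y; rewrite /ptrace scaler_sumr -big_split; apply: eq_bigr => i _; rewrite linearP.
Qed.

HB.instance Definition _ n :=
  GRing.isLinear.Build C _ _ _ (@ptrace R n) (@ptrace_is_linear n).

Lemma blk_inj k n (X Y : 'M[C]_(k * n)) :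
  (forall i j, blk i j X = blk i j Y) -> X = Y.
Proof.
move=> eqXY; apply/matrixP => x y.
case: (mxtens_indexP x) => i p; case: (mxtens_indexP y) => j q.
by have /matrixP/(_ p q) := eqXY i j; rewrite !mxE.
Qed.

Lemma blk_tens k n (A : 'M[C]_k) (B : 'M[C]_n) i j : blk i j (A *t B) = A i j *: B.
Proof. by apply/matrixP => p q; rewrite mxE tensmxE mxE. Qed.

Lemma sum_delta_mx_coef k m (F : 'I_k -> 'I_k -> 'M[C]_m) i j :
  \sum_(a < k) \sum_(b < k) (delta_mx a b i j *: F a b) = F i j.
Proof.
rewrite (bigD1 i) //= (bigD1 j) //= !mxE !eqxx scale1r !big1 ?addr0 //.
  move=> a /negPf nai; apply: big1 => b _.
  by rewrite mxE eq_sym nai scale0r.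
by move=> b /negPf nbj; rewrite mxE eqxx eq_sym nbj scale0r.
Qed.

Lemma blk_expand k n (X : 'M[C]_(k * n)) :
  X = \sum_(i < k) \sum_(j < k) (delta_mx i j *t blk i j X).
Proof.
apply: blk_inj => a b; rewrite raddf_sum /=.
rewrite -[LHS](sum_delta_mx_coef (fun i j => blk i j X)); apply: eq_bigr => i _.
by rewrite raddf_sum /=; apply: eq_bigr => j _; rewrite blk_tens.
Qed.

Lemma blk_ampl k n (phi : 'M[C]_n -> 'M[C]_n) (X : 'M[C]_(k * n)) i j :
  blk i j (ampl phi X) = phi (blk i j X).
Proof.
rewrite raddf_sum /= -[RHS](sum_delta_mx_coef (fun a b => phi (blk a b X))).
by apply: eq_bigr => a _; rewrite raddf_sum /=; apply: eq_bigr => b _; rewrite blk_tens.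
Qed.

End Blocks.

Section Positive.
Variable R : realType.
Local Notation C := R[i].

Lemma adj_mxE m p (A : 'M[C]_(m, p)) i j : adj A i j = (A j i)^*.
Proof. by rewrite /adj !mxE. Qed.

Lemma adjmD m p (A B : 'M[C]_(m, p)) : adj (A + B) = adj A + adj B.
Proof. by rewrite /adj map_mxD linearD. Qed.

Lemma adjmZ m p (c : C) (A : 'M[C]_(m, p)) : adj (c *: A) = c^* *: adj A.
Proof. by apply/matrixP => i j; rewrite /adj !mxE rmorphM. Qed.

Lemma adjmM m p r (A : 'M[C]_(m, p)) (B : 'M[C]_(p, r)) : adj (A *m B) = adj B *m adj A.
Proof. by rewrite /adj map_mxM trmx_mul. Qed.

Lemma adjmK m p (A : 'M[C]_(m, p)) : adj (adj A) = A.
Proof. by apply/matrixP => i j; rewrite /adj !mxE conjCK. Qed.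

Lemma adj1mx m : adj (1%:M : 'M[C]_m) = 1%:M.
Proof. by rewrite /adj map_mx1 trmx1. Qed.

Lemma adj_tens m p r s (A : 'M[C]_(m, p)) (B : 'M[C]_(r, s)) :
  adj (A *t B) = adj A *t adj B.
Proof. by rewrite /adj map_mxT trmx_tens. Qed.

Lemma adj_delta_col m (a : 'I_m) : adj (delta_mx a 0 : 'cV[C]_m) = delta_mx 0 a.
Proof. by apply/matrixP => i j; rewrite /adj !mxE rmorph_nat andbC. Qed.

Lemma form_delta m (X : 'M[C]_m) a b :
  adj (delta_mx a 0 : 'cV[C]_m) *m X *m delta_mx b 0 = (X a b)%:M.
Proof.
by rewrite adj_delta_col -rowE -colE; apply/matrixP => i j; rewrite !ord1 !mxE eqxx.
Qed.

Lemma adj_mul_diag_ge0 m p (A : 'M[C]_(m, p)) i : 0 <= (adj A *m A) i i.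
Proof.
by rewrite mxE; apply: sumr_ge0 => j _; rewrite /adj !mxE mulrC mul_conjC_ge0.
Qed.

Lemma psd_adj_mul m p (A : 'M[C]_(m, p)) : psd (adj A *m A).
Proof. by move=> v; rewrite mulmxA -adjmM -mulmxA; apply: adj_mul_diag_ge0. Qed.

Lemma psd_congr m p (X : 'M[C]_m) (A : 'M[C]_(m, p)) : psd X -> psd (adj A *m X *m A).
Proof. by move=> psdX v; rewrite !mulmxA -adjmM -!mulmxA mulmxA; apply: psdX. Qed.

Lemma psdD m (X Y : 'M[C]_m) : psd X -> psd Y -> psd (X + Y).
Proof. by move=> psdX psdY v; rewrite mulmxDr mulmxDl mxE addr_ge0. Qed.

Lemma psdZ m (c : C) (X : 'M[C]_m) : 0 <= c -> psd X -> psd (c *: X).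
Proof. by move=> c0 psdX v; rewrite -scalemxAr -scalemxAl mxE mulr_ge0. Qed.

Lemma psd_sum m k (F : 'I_k -> 'M[C]_m) : (forall r, psd (F r)) -> psd (\sum_r F r).
Proof.
move=> psdF v; rewrite mulmx_sumr mulmx_suml summxE.
by apply: sumr_ge0 => r _; apply: psdF.
Qed.

Lemma psd_diag_ge0 m (X : 'M[C]_m) a : psd X -> 0 <= X a a.
Proof. by move=> psdX; have := psdX (delta_mx a 0); rewrite form_delta mxE eqxx mulr1n. Qed.

(* Polarization: compare the forms at [e_a + e_b] and [e_a + 'i e_b]. *)
Lemma diag_form_eq0 m (D : 'M[C]_m) :
  (forall v : 'cV[C]_m, (adj v *m D *m v) 0 0 = 0) -> D = 0.
Proof.
move=> D0; apply/matrixP => a b; rewrite mxE.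
have Dxx x : D x x = 0.
  by have := D0 (delta_mx x 0); rewrite form_delta mxE eqxx mulr1n.
have cross c : c * D a b + c^* * D b a = 0.
  have := D0 (delta_mx a 0 + c *: delta_mx b 0).
  rewrite adjmD adjmZ !mulmxDl !mulmxDr -!scalemxAl -!scalemxAr !form_delta.
  by rewrite !mxE !eqxx !mulr1n !Dxx !mulr0 add0r addr0.
have c1 := cross 1; have ci := cross 'i.
rewrite rmorph1 !mul1r in c1; rewrite conjCi in ci.
have : 'i * (D a b - D b a) = 0 by rewrite -ci; ring.
move=> /eqP; rewrite mulf_eq0 (negPf (neq0Ci C)) /= subr_eq0 => /eqP eqab.
by move: c1; rewrite -eqab -mulr2n => /eqP; rewrite mulrn_eq0 /= => /eqP.
Qed.

Lemma psd_adj m (X : 'M[C]_m) : psd X -> adj X = X.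
Proof.
move=> psdX; apply/eqP; rewrite -subr_eq0; apply/eqP/diag_form_eq0 => v.
rewrite mulmxBr mulmxBl.
have -> : adj v *m adj X *m v = adj (adj v *m X *m v) by rewrite !adjmM adjmK mulmxA.
move: (adj v *m X *m v) (psdX v) => q q_ge0.
by rewrite !mxE geC0_conj ?subrr.
Qed.

End Positive.

Section Gram.
Variable R : realType.
Local Notation C := R[i].
Local Open Scope sesquilinear_scope.

Lemma psd_gram m (Y : 'M[C]_m) : psd Y -> exists Z : 'M[C]_m, Y = adj Z *m Z.
Proof.
have adjE (A : 'M[C]_m) : A ^t* = adj A by rewrite /adj map_trmx.
move=> psdY; have Yadj : Y ^t* = Y by rewrite adjE psd_adj.
have /orthomx_spectralP Yeq : Y \is normalmx by apply/normalmxP; rewrite Yadj.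
set P := spectralmx Y in Yeq; set d := spectral_diag Y in Yeq.
have Pu : P \is unitarymx := spectral_unitarymx Y.
rewrite invmx_unitary // in Yeq.
have d_ge0 r : 0 <= d 0 r.
  have := psdY (P ^t* *m delta_mx r 0).
  rewrite adjmM adj_delta_col adjE adjmK -adjE Yeq !mulmxA mulmxtVK // mulmxtVK //.
  by rewrite -rowE -colE !mxE eqxx mulr1n.
exists (\matrix_(r, b) (sqrtC (d 0 r) * P r b)); apply/matrixP => a b.
rewrite {1}Yeq !mxE; apply: eq_bigr => r _.
rewrite mul_mx_diag !mxE rmorphM /= (geC0_conj (x := sqrtC _)) ?sqrtC_ge0 //.
by rewrite mulrACA -expr2 sqrtCK; ring.
Qed.

End Gram.

Section Delta.
Variable R : realType.
Local Notation C := R[i].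

Lemma blk_Delta n (a b : 'I_n) : blk a b (Delta R n) = delta_mx a b.
Proof.
rewrite raddf_sum /= -[RHS](sum_delta_mx_coef (fun i j => delta_mx i j)).
by apply: eq_bigr => i _; rewrite raddf_sum /=; apply: eq_bigr => j _; rewrite blk_tens.
Qed.

Lemma ptrace_Delta n : ptrace (Delta R n) = 1%:M.
Proof.
by rewrite mx1_sum_delta /ptrace; apply: eq_bigr => i _; rewrite blk_Delta.
Qed.

(* Delta_n is the rank-one matrix w^* w with w = \sum_i e_i (x) e_i. *)
Lemma psd_Delta n : psd (Delta R n).
Proof.
pose w : 'rV[C]_(n * n) :=
  \row_x ((mxtens_unindex x).1 == (mxtens_unindex x).2)%:R.
suff -> : Delta R n = adj w *m w by apply: psd_adj_mul.
apply: blk_inj => a b; rewrite blk_Delta; apply/matrixP => p q.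
rewrite !mxE big_ord1 adj_mxE !mxE !mxtens_indexK /= rmorph_nat.
rewrite [p == a]eq_sym [q == b]eq_sym.
by do 2 case: eqP => _ //=; rewrite ?(mulr0, mul0r, mulr1).
Qed.

Lemma ptrace_ampl n (phi : 'M[C]_n -> 'M[C]_n) :
  linear phi -> ptrace (ampl phi (Delta R n)) = phi 1%:M.
Proof.
move=> lin_phi; pose phiL : {linear 'M[C]_n -> 'M[C]_n} :=
  HB.pack phi (GRing.isLinear.Build _ _ _ _ phi lin_phi).
rewrite mx1_sum_delta -[phi _]/(phiL _) [in RHS]raddf_sum /ptrace.
by apply: eq_bigr => i _; rewrite blk_ampl blk_Delta.
Qed.

Lemma ptrace_diag_ge0 n (X : 'M[C]_(n * n)) p : psd X -> 0 <= ptrace X p p.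
Proof.
by move=> psdX; rewrite summxE; apply: sumr_ge0 => i _; rewrite mxE; apply: psd_diag_ge0.
Qed.

Lemma in_tensSP n (S : {vspace 'M[C]_n}) (X : 'M[C]_(n * n)) :
  in_tensS S X <-> forall a b, blk a b X \in S.
Proof.
split.
  move=> [m [A [B [SB ->]]]] a b; rewrite raddf_sum /=.
  by apply: memv_suml => k _; rewrite blk_tens; apply: memvZ.
move=> SX; exists (n * n)%N.
exists (fun x => delta_mx (mxtens_unindex x).1 (mxtens_unindex x).2).
exists (fun x => blk (mxtens_unindex x).1 (mxtens_unindex x).2 X).
split=> [x|]; first exact: SX.
rewrite {1}[X]blk_expand sum_mxtens_index.
by apply: eq_bigr => i _; apply: eq_bigr => j _; rewrite mxtens_indexK.
Qed.

End Delta.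

Section Choi.
Variable R : realType.
Local Notation C := R[i].

Lemma ampl_congr k n (K : 'M[C]_n) (X : 'M[C]_(k * n)) :
  ampl (fun A => adj K *m A *m K) X = adj (1%:M *t K) *m X *m (1%:M *t K).
Proof.
rewrite {2}[X]blk_expand adj_tens adj1mx mulmx_sumr mulmx_suml.
apply: eq_bigr => i _; rewrite mulmx_sumr mulmx_suml; apply: eq_bigr => j _.
by rewrite !tensmx_mul mul1mx mulmx1.
Qed.

Lemma kraus_CP n r (K : 'I_r -> 'M[C]_n) :
  CP (fun A => \sum_s adj (K s) *m A *m K s).
Proof.
split.
  move=> c A B; rewrite scaler_sumr -big_split; apply: eq_bigr => s _.
  by rewrite mulmxDr mulmxDl -scalemxAr -scalemxAl.
move=> k X psdX.
have -> : ampl (fun A => \sum_s adj (K s) *m A *m K s) X =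
          \sum_s ampl (fun A => adj (K s) *m A *m K s) X.
  apply: blk_inj => a b; rewrite blk_ampl raddf_sum /=.
  by apply: eq_bigr => s _; rewrite blk_ampl.
by apply: psd_sum => s; rewrite ampl_congr; apply: psd_congr.
Qed.

Definition choi_map n (Y : 'M[C]_(n * n)) (A : 'M[C]_n) : 'M[C]_n :=
  \sum_(a < n) \sum_(b < n) A a b *: blk a b Y.

(* The Kraus operators of [choi_map (Z^* Z)] are the rows of [Z] reshaped into
   n x n matrices. *)
Lemma choi_map_gram n (Z : 'M[C]_(n * n)) (A : 'M[C]_n) :
  choi_map (adj Z *m Z) A =
  \sum_s adj (\matrix_(a, q) Z s (mxtens_index (a, q))) *m A
           *m \matrix_(a, q) Z s (mxtens_index (a, q)).
Proof.
apply/matrixP => p q; rewrite !summxE.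
under eq_bigr => a _ do rewrite summxE.
transitivity (\sum_a \sum_b \sum_s
  ((Z s (mxtens_index (a, p)))^* * A a b * Z s (mxtens_index (b, q)))).
  apply: eq_bigr => a _; apply: eq_bigr => b _.
  by rewrite !mxE mulr_sumr; apply: eq_bigr => s _; rewrite !mxE; ring.
transitivity (\sum_s \sum_b \sum_a
  ((Z s (mxtens_index (a, p)))^* * A a b * Z s (mxtens_index (b, q)))); last first.
  apply: eq_bigr => s _; rewrite !mxE; apply: eq_bigr => b _.
  by rewrite !mxE mulr_suml; apply: eq_bigr => a _; rewrite !mxE.
rewrite exchange_big; under eq_bigr => b _ do rewrite exchange_big.
exact: exchange_big.
Qed.

Lemma choi_map_CP n (Y : 'M[C]_(n * n)) : psd Y -> CP (choi_map Y).
Proof.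
move=> /psd_gram [Z ->].
by rewrite (funext (choi_map_gram Z)); apply: kraus_CP.
Qed.

Lemma choi_mapD n (Y1 Y2 : 'M[C]_(n * n)) A :
  choi_map (Y1 + Y2) A = choi_map Y1 A + choi_map Y2 A.
Proof.
rewrite /choi_map -big_split; apply: eq_bigr => a _; rewrite -big_split.
by apply: eq_bigr => b _; rewrite raddfD scalerDr.
Qed.

Lemma choi_map_Delta n (A : 'M[C]_n) : choi_map (Delta R n) A = A.
Proof.
rewrite /choi_map [RHS]matrix_sum_delta; apply: eq_bigr => a _.
by apply: eq_bigr => b _; rewrite blk_Delta.
Qed.

Lemma choi_map_scalar n (Y : 'M[C]_(n * n)) (c : C) :
  choi_map Y c%:M = c *: ptrace Y.
Proof.
rewrite /choi_map /ptrace scaler_sumr; apply: eq_bigr => i _.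
rewrite (bigD1 i) //= mxE eqxx mulr1n big1 ?addr0 // => j /negPf.
by rewrite mxE eq_sym => ->; rewrite mulr0n scale0r.
Qed.

End Choi.


Section Correspondence.
Local Open Scope classical_set_scope.
Variable R : realType.
Local Notation C := R[i].
Local Notation "x %:C" := (real_complex R x).

Lemma norm_scalar_sq n (t : R) (v : 'cV[C]_n) : (adj v *m v) 0 0 = 1 ->
  (adj ((t%:C)%:M *m v) *m ((t%:C)%:M *m v)) 0 0 = (t ^+ 2)%:C.
Proof.
rewrite mul_scalar_mx adjmZ -scalemxAl -scalemxAr !mxE => ->.
have -> : (t%:C)^* = t%:C by exact: conjc_real.
by rewrite mulr1 rmorphXn expr2.
Qed.

Lemma opnorm_scalar n (t : R) : (0 < n)%N -> 0 <= t ->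
  opnorm ((t%:C)%:M : 'M[C]_n) = t.
Proof.
move=> n_gt0 t_ge0; rewrite /opnorm; set E := [set r : R | _].
pose e : 'cV[C]_n := delta_mx (Ordinal n_gt0) 0.
have e1 : (adj e *m e) 0 0 = 1 by rewrite adj_delta_col mul_delta_mx mxE eqxx.
have Et : E t by exists e; rewrite norm_scalar_sq.
have Eub : ubound E t.
  move=> r [v [v1 [r_ge0]]]; rewrite norm_scalar_sq // => /complexI /eqP.
  by rewrite eqf_sqr => /orP [/eqP -> // | /eqP ->]; lra.
by apply/eqP; rewrite eq_le ge_sup ?ub_le_sup //; exists t.
Qed.

Lemma complex_ge1 (c : C) : 1 <= c -> exists2 x : R, 1 <= x & c = x%:C.
Proof.
case: c => x y; rewrite lecE /= => /andP [/eqP y0 x_ge1].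
by exists x => //; rewrite y0.
Qed.

Lemma sdp_feasible_of_admissible n (S : {vspace 'M[C]_n}) (phi : 'M[C]_n -> 'M[C]_n) :
  (0 < n)%N -> CP phi -> (forall a : C, exists c : C, phi a%:M = c%:M) ->
  (forall A, phi A \in S) -> CP (fun A => phi A - A) ->
  1 <= opnorm (phi 1%:M) /\ sdp_feasible S (opnorm (phi 1%:M))^-1.
Proof.
move=> n_gt0 [lin_phi _] phi_scalar phiS [_ CP_phiB].
set P := ampl phi (Delta R n).
have psd_PB : psd (P - Delta R n).
  have -> : P - Delta R n = ampl (fun A => phi A - A) (Delta R n).
    by apply: blk_inj => a b; rewrite raddfB /= !blk_ampl blk_Delta.
  by apply: CP_phiB; apply: psd_Delta.
have [c phi1] := phi_scalar 1.
have ptrace_PB : ptrace (P - Delta R n) = (c - 1)%:M.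
  by rewrite raddfB /= ptrace_ampl // ptrace_Delta phi1 raddfB.
have [x x_ge1 cE] : exists2 x : R, 1 <= x & c = x%:C.
  apply: complex_ge1; rewrite -subr_ge0.
  by have := ptrace_diag_ge0 (Ordinal n_gt0) psd_PB; rewrite ptrace_PB mxE eqxx mulr1n.
rewrite phi1 cE (opnorm_scalar n_gt0 (le_trans ler01 x_ge1)).
split=> //; exists ((x^-1)%:C *: (P - Delta R n)); split.
- rewrite linearZ /= ptrace_PB cE scale_scalar_mx -[1 : C]/(1%:C) -rmorphB -rmorphM.
  by rewrite mulrBr mulVf ?mulr1 //; apply/eqP; lra.
- apply/in_tensSP => a b; rewrite scalerBr addrNK linearZ /= blk_ampl.
  exact/memvZ/phiS.
- by apply: psdZ psd_PB; rewrite ler0c invr_ge0; lra.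
Qed.

Lemma admissible_of_sdp_feasible n (S : {vspace 'M[C]_n}) l :
  (0 < n)%N -> sdp_feasible S l -> 0 < l ->
  exists phi : 'M[C]_n -> 'M[C]_n,
   [/\ CP phi, (forall a : C, exists c : C, phi a%:M = c%:M),
       (forall A, phi A \in S), CP (fun A => phi A - A)
     & l^-1 = opnorm (phi 1%:M)].
Proof.
move=> n_gt0 [X [ptraceX SX psdX]] l_gt0.
set Y := (l^-1)%:C *: (X + l%:C *: Delta R n).
have YE : Y = (l^-1)%:C *: X + Delta R n.
  by rewrite /Y scalerDr scalerA -rmorphM mulVf ?scale1r //; apply/eqP; lra.
have ptraceY : ptrace Y = (l^-1)%:C%:M.
  rewrite YE raddfD /= [ptrace (_ *: _)]linearZ /= ptraceX ptrace_Delta.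
  rewrite scale_scalar_mx -[1%:M]/((1 : C)%:M) -(raddfD (@scalar_mx _ n)) /=.
  rewrite -[1 : C]/(1%:C) -rmorphM -rmorphD mulrBr mulr1 mulVf ?subrK //.
  by apply/eqP; lra.
exists (choi_map Y); split.
- apply: choi_map_CP; rewrite YE; apply: psdD; last exact: psd_Delta.
  by apply: psdZ psdX; rewrite ler0c invr_ge0; lra.
- by move=> a; exists (a * (l^-1)%:C); rewrite choi_map_scalar ptraceY scale_scalar_mx.
- move=> A; apply: memv_suml => a _; apply: memv_suml => b _.
  by apply: memvZ; rewrite /Y linearZ /=; apply: memvZ; move/in_tensSP: SX.
- have -> : (fun A => choi_map Y A - A) = choi_map ((l^-1)%:C *: X).
    by apply: funext => A; rewrite YE choi_mapD choi_map_Delta addrK.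
  by apply: choi_map_CP; apply: psdZ psdX; rewrite ler0c invr_ge0; lra.
- by rewrite choi_map_scalar scale1r ptraceY opnorm_scalar // invr_ge0; lra.
Qed.

Lemma sdp_feasible0 n (S : {vspace 'M[C]_n}) :
  (0 < n)%N -> matricial_system S -> sdp_feasible S 0.
Proof.
move=> n_gt0 [S1 _].
have blk1 a b : blk a b (1%:M : 'M[C]_(n * n)) = (a == b)%:R *: 1%:M.
  apply/matrixP => p q; rewrite !mxE (inj_eq (can_inj (@mxtens_indexK n n))) xpair_eqE.
  by do 2 case: eqP => _ //=; rewrite ?(mulr0n, mul0r, mulr1n, mul1r).
exists ((n%:R : C)^-1 *: 1%:M); split.
- rewrite [ptrace _]linearZ /= /ptrace; under eq_bigr => i _ do rewrite blk1 eqxx scale1r.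
  rewrite sumr_const card_ord subr0; apply/matrixP => p q; rewrite !mxE mulmxnE !mxE.
  have n_neq0 : (n%:R : C) != 0 by rewrite pnatr_eq0 -lt0n.
  by case: eqP => _; rewrite ?(mulr1n, mulr0n, mul0rn, mulr0, mulVf).
- apply/in_tensSP => a b; rewrite scale0r addr0 [blk _ _ _]linearZ /= blk1.
  exact/memvZ/memvZ.
- apply: psdZ; first by rewrite invr_ge0 ler0n.
  by have := psd_adj_mul (1%:M : 'M[C]_(n * n)); rewrite adj1mx mulmx1.
Qed.

Lemma sdp_feasible_le1 n (S : {vspace 'M[C]_n}) l :
  (0 < n)%N -> sdp_feasible S l -> l <= 1.
Proof.
move=> n_gt0 [X [ptraceX _ psdX]]; have := ptrace_diag_ge0 (Ordinal n_gt0) psdX.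
by rewrite ptraceX mxE eqxx mulr1n ler0c subr_ge0.
Qed.

End Correspondence.

Section InverseInfSup.
Local Open Scope classical_set_scope.
Variable R : realType.
Variables E F : set R.
Hypothesis F0 : F 0.
Hypothesis F_le1 : forall l, F l -> l <= 1.
Hypothesis E_inv : forall r, E r -> 1 <= r /\ F r^-1.
Hypothesis F_invE : forall l, F l -> 0 < l -> E l^-1.

Lemma inv_inf_eq_sup : (inf E)^-1 = sup F.
Proof.
have supF : has_sup F by split; [exists 0 | exists 1 => l /F_le1].
have [[r Er] | E0] := pselect (E !=set0); last first.
  have -> : E = set0 by apply/seteqP; split=> // x Ex; apply: E0; exists x.
  rewrite inf0 invr0; apply/eqP; rewrite eq_le; apply/andP; split.
    exact (ub_le_sup (proj2 supF) F0).
  apply: ge_sup => [|l Fl]; first by exists 0.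
  by rewrite leNgt; apply/negP => /(F_invE Fl) El; apply: E0; exists l^-1.
have lbE : has_lbound E by exists 1 => x /E_inv [].
have infE_gt0 : 0 < inf E.
  by apply: lt_le_trans ltr01 _; apply: lb_le_inf => [|x /E_inv []]; first exists r.
have supF_gt0 : 0 < sup F.
  apply: lt_le_trans (ub_le_sup (proj2 supF) (proj2 (E_inv Er))).
  by rewrite invr_gt0 (lt_le_trans ltr01 (proj1 (E_inv Er))).
apply/eqP; rewrite eq_le; apply/andP; split.
  rewrite invf_ple ?posrE //; apply: lb_le_inf => [|x Ex]; first by exists r.
  have x_gt0 : 0 < x by apply: lt_le_trans ltr01 (proj1 (E_inv Ex)).
  by rewrite invf_ple ?posrE //; exact (ub_le_sup (proj2 supF) (proj2 (E_inv Ex))).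
apply: ge_sup => [|l Fl]; first by exists 0.
have [l_le0|l_gt0] := lerP l 0; first by rewrite (le_trans l_le0) // invr_ge0 ltW.
by rewrite invf_pge ?posrE //; exact (ge_inf lbE (F_invE Fl l_gt0)).
Qed.

End InverseInfSup.

Theorem proposition4p1 (R : realType) (n : nat) (S : {vspace 'M[R[i]]_n}) :
  (0 < n)%N -> matricial_system S ->
  (IndCP S)^-1 = sdp_value S.
Proof.
move=> n_gt0 S_sys; apply: inv_inf_eq_sup.
- exact: sdp_feasible0.
- by move=> l; apply: sdp_feasible_le1.
- by move=> r [phi [? ? ? ? ->]]; apply: sdp_feasible_of_admissible.
- move=> l Fl l_gt0; have [phi [? ? ? ? ?]] := admissible_of_sdp_feasible n_gt0 Fl l_gt0.
  by exists phi.
Qed.
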